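(* Let $v\in\mathrm{Box}(\Sigma)$ and let $\log_1,\dots,\log_n$ be arbitrary branches of the logarithm on the discs $B^v_1,\dots,B^v_n$. For $U\subset\mathbb C^n$ an open simply connected domain and $z\in U$, consider $\varphi(z,r)=\prod_{j=1}^n\frac{z_j^{\frac1{2\pi i}\log_jr_j}}{\Gamma(\frac1{2\pi i}\log_jr_j+1)}$, analytic on $U\times B^v$. Then the linear operator $\varphi(z,\mathcal R):(K_0(\mathbb P_\Sigma,\mathbb C))_v\to(K_0(\mathbb P_\Sigma,\mathbb C))_v$ is zero unless there exists a cone $\sigma\in\Sigma$ with $\sigma(v)\subset\sigma$ whose rays contain all $v_j\in\mathcal A$ for which $\frac1{2\pi i}\log_jy^v_j$ is not a nonnegative integer.
   Context: $N\cong\mathbb Z^d$, $M=\mathrm{Hom}(N,\mathbb Z)$, $\mathcal A=\{v_1,\dots,v_n\}\subset N$ generating $N$ with a homomorphism $\mathrm h:N\to\mathbb Z$, $\mathrm h(v_j)=1$; $\Sigma$ the simplicial fan supported on $\mathbb R_{\ge0}\mathrm{Conv}(\mathcal A)$ from a regular triangulation with vertices in $\mathcal A$, a stacky fan with the vectors $v_j$ on its rays. $K_0(\mathbb P_\Sigma,\mathbb C)$ is the complexified Grothendieck ring of the toric Deligne–Mumford stack $\mathbb P_\Sigma$ (Borisov–Chen–Smith), isomorphic to $\mathbb C[R_1^{\pm1},\dots,R_n^{\pm1}]$ modulo $\prod_jR_j^{\langle m,v_j\rangle}=1$ ($m\in M$) and $\prod_{j\in J}(1-R_j)=0$ whenever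 $\{v_j:j\in J\}$ do not generate a cone of $\Sigma$. $\mathrm{Box}(\Sigma)$: $v=\sum q^v_jv_j\in N$ with $0\le q^v_j<1$, $q^v_j=0$ unless $v_j$ spans a ray of a fixed maximal cone; $\sigma(v)$ the smallest cone containing $v$; $y^v_j=e^{2\pi iq^v_j}$. $K_0(\mathbb P_\Sigma,\mathbb C)$ is Artinian and is the direct sum of its localizations $(K_0(\mathbb P_\Sigma,\mathbb C))_v$ at the maximal ideals $(R_1-y^v_1,\dots,R_n-y^v_n)$, $v\in\mathrm{Box}(\Sigma)$. $\mathcal R_j$ is the operator of multiplication by $R_j$; on $(K_0)_v$ its spectrum is $\{y^v_j\}$. $B^v_j$ is an open disc of small radius centred at $y^v_j$ not containing $0$, $B^v=B^v_1\times\dots\times B^v_n$. For an analytic function $\phi$ on a neighbourhood of the joint spectrum, $\phi(\mathcal R)$ denotes the usual holomorphic functional calculus of commuting operators (equal to $P(\mathcal R)$ for any polynomial $P$ whose derivatives agree with those of $\phi$ at the spectrum up to the relevant indices). $z_j^a=e^{a(\log|z_j|+i\arg z_j)}$. *)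

From HB Require Import structures.
From mathcomp Require Import all_boot all_order all_algebra.
From mathcomp Require Import mpoly.
From mathcomp Require Import all_classical all_reals all_analysis.
From mathcomp Require Import complex.
Set Implicit Arguments. Unset Strict Implicit. Unset Printing Implicit Defensive.
Import Order.TTheory GRing.Theory Num.Theory.
Import numFieldNormedType.Exports.
Local Open Scope ring_scope.
Local Open Scope complex_scope.

Definition Cx (R : realType) : numFieldType := R[i].

Section Complex.
Variable R : realType.
Local Notation C := (Cx R).

Definition cexp (w : C) : C := limn (series (fun k : nat => w ^+ k / (k`!)%:R)).

Definition two_pi_i : C := 2%:R * (pi : R)%:C * 'i.

(* the reciprocal Gamma function 1/Gamma(s), via Gauss's product formula
   1/Gamma(s) = lim_m s(s+1)...(s+m) / (m! m^s),  m^s = exp(s ln m);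
   it is entire and vanishes exactly at s = 0,-1,-2,... *)
Definition rgamma (s : C) : C :=
  limn (fun m : nat => (\prod_(k < m.+1) (s + k%:R)) /
                       ((m`!)%:R * cexp (s * (ln (m%:R : R))%:C))).

Definition disc (c : C) (rho : R) : set C := [set r : C | `|r - c| < rho%:C].

Definition cderive (f : C -> C) (x : C) : C := derive1 (R := C) (V := C) f x.

Definition upd n (r : 'I_n -> C) (j : 'I_n) (w : C) : 'I_n -> C :=
  fun k => if k == j then w else r k.
Definition pderiv n (j : 'I_n) (F : ('I_n -> C) -> C) : ('I_n -> C) -> C :=
  fun r => cderive (fun w => F (upd r j w)) (r j).
Definition pderivs n (al : 'I_n -> nat) (F : ('I_n -> C) -> C) : ('I_n -> C) -> C :=
  foldr (fun j => iter (al j) (pderiv j)) F (enum 'I_n).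
End Complex.

(* Fans from regular triangulations.  A = {v_1..v_n} in N = Z^d,       *)
Section Fan.
Variables (R : realType) (n d : nat) (v : 'I_n -> 'I_d -> int) (w : 'I_n -> R).

Definition pairv (psi : 'I_d -> R) (x : 'I_d -> int) : R :=
  \sum_(k < d) psi k * (x k)%:~R.

(* psi is a lower supporting functional of the lifted points (v_i, w_i) *)
Definition lower_support (psi : 'I_d -> R) : Prop :=
  forall i, pairv psi (v i) <= w i.

(* genericity: every lower face of the lifted configuration is a simplex,
   i.e. the points of A on it are linearly independent; then the lower faces
   project to a (regular) triangulation of Conv(A) with vertices in A *)
Definition regular_triangulation_heights : Prop :=
  forall psi, lower_support psi ->
  forall c : 'I_n -> R,
    (forall i, c i != 0 -> pairv psi (v i) = w i) ->
    (forall k, \sum_(i < n) c i * (v i k)%:~R = 0) ->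
    forall i, c i = 0.

(* {v_j : j in J} generates a cone of Sigma (J is (contained in) the vertex
   set of a simplex of the regular triangulation) *)
Definition fan_cone (J : {set 'I_n}) : Prop :=
  exists psi, lower_support psi /\ (forall j, j \in J -> pairv psi (v j) = w j).
End Fan.

(* The complexified K-theory ring K_0(P_Sigma, C), presented as a       *)
(* quotient of the Laurent polynomial ring C[R_j^{+-1}], written as     *)
(* C[R_1..R_n, S_1..S_n] / (R_j S_j - 1, ...).                          *)
Section K0.
Variables (R : realType) (n d : nat) (v : 'I_n -> 'I_d -> int) (w : 'I_n -> R).
Local Notation C := (Cx R).
Local Notation LP := (mpoly.mpoly (n + n) C).

Definition Rvar (j : 'I_n) : LP := @mpoly.mpolyX (n + n) C (mpoly.mnm1 (lshift n j)).
Definition Svar (j : 'I_n) : LP := @mpoly.mpolyX (n + n) C (mpoly.mnm1 (rshift n j)).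

Definition Rpow (j : 'I_n) (e : int) : LP :=
  if (0 <= e)%R then Rvar j ^+ `|e|%N else Svar j ^+ `|e|%N.

Inductive K0_rel : LP -> Prop :=
| K0_rel_inv j : K0_rel (Rvar j * Svar j - 1)
| K0_rel_lin (m : 'I_d -> int) :
    K0_rel (\prod_(j < n) Rpow j (\sum_(k < d) m k * v j k) - 1)
| K0_rel_SR (J : {set 'I_n}) : ~ fan_cone v w J -> K0_rel (\prod_(j in J) (1 - Rvar j)).

Inductive in_ideal (G : LP -> Prop) : LP -> Prop :=
| in_ideal0 : in_ideal G 0
| in_ideal_gen g a p : G g -> in_ideal G p -> in_ideal G (a * g + p).

Definition laurent_pt (y : 'I_n -> C) (i : 'I_(n + n)) : C :=
  match fintype.split i with inl j => y j | inr j => (y j)^-1 end.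

(* the class of p is zero in the localization (K_0)_v of K_0 at the maximal
   ideal (R_1 - y_1, ..., R_n - y_n): some s outside the maximal ideal
   satisfies s p = 0 in K_0 *)
Definition loc_zero (y : 'I_n -> C) (p : LP) : Prop :=
  exists s : LP, mpoly.meval (laurent_pt y) s != 0 /\ in_ideal K0_rel (s * p).

Definition embedP (P : mpoly.mpoly n C) : LP :=
  mpoly.mmap (@mpoly.mpolyC (n + n) C) Rvar P.

Definition mderivs (al : 'I_n -> nat) (P : mpoly.mpoly n C) : mpoly.mpoly n C :=
  foldr (fun j => iter (al j) (@mpoly.mderiv n C j)) P (enum 'I_n).
End K0.

Section Phi.
Variable R : realType.
Local Notation C := (Cx R).

Definition boxy n (q : 'I_n -> R) (j : 'I_n) : C := cexp (two_pi_i R * (q j)%:C).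

(* z^a = exp(a (log|z| + i arg z)), with theta a chosen value of arg z *)
Definition cpow (z : C) (theta : R) (a : C) : C :=
  cexp (a * ((ln (complex.Re (`|z| : R[i])))%:C + 'i * theta%:C)).

Definition phi n (logb : 'I_n -> C -> C) (z : 'I_n -> C) (theta : 'I_n -> R)
  (r : 'I_n -> C) : C :=
  \prod_(j < n) (cpow (z j) (theta j) (logb j (r j) / two_pi_i R) *
                 rgamma (logb j (r j) / two_pi_i R + 1)).
End Phi.

Local Open Scope classical_set_scope.
Definition log_branch (R : realType) (c : Cx R) (rho : R) (f : Cx R -> Cx R) : Prop :=
  {within disc c rho, continuous f} /\ (forall r, disc c rho r -> cexp (f r) = r).

From HB Require Import structures.
From mathcomp Require Import all_boot all_order all_algebra.
From mathcomp Require Import mpoly.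
From mathcomp Require Import all_classical all_reals all_analysis.
From mathcomp Require Import complex.
From mathcomp Require Import ring lra.
Set Implicit Arguments. Unset Strict Implicit. Unset Printing Implicit Defensive.
Import Order.TTheory GRing.Theory Num.Theory.
Import numFieldNormedType.Exports.
Local Open Scope ring_scope.
Local Open Scope complex_scope.
Local Open Scope classical_set_scope.

(* Let y = y^v and let T be the set of j such that y_j <> 1 or log_j(y_j)/(2 pi i)
   is not a nonnegative integer.  Since q_j > 0 forces y_j <> 1, the hypothesis
   says that T spans no cone, so prod_(j in T) (1 - R_j) = 0 in K_0.  The factors
   with y_j <> 1 are units at y, hence the product of the R_j - y_j over
   J = {j in T | y_j = 1} vanishes in (K_0)_v.  For j in J, log_j(1) = 2 pi i k
   with k a negative integer, so the factor 1/Gamma(k + 1) makes phi(z, .) vanish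
   on the hyperplane r_j = 1, together with every derivative not involving r_j.
   Now expand P in powers of R - y: each monomial either has an exponent >= N
   (nilpotent), or is divisible by prod_(j in J) (R_j - y_j), or misses some
   j in J, and then its Taylor coefficient is such a derivative of phi, i.e. 0. *)

Section ExpPartialSums.
Variable K : numFieldType.

Definition exp_term (a : K) k := a ^+ k / k`!%:R.
Definition exp_psum (a : K) m := \sum_(k < m) exp_term a k.

Lemma sum_triangle m (F : nat -> nat -> K) :
  \sum_(k < m) \sum_(i < k.+1) F i (k - i)%N =
  \sum_(i < m) \sum_(j < m - i) F i j.
Proof.
transitivity (\sum_(k < m) \sum_(i < m | (i <= k)%N) F i (k - i)%N).
  apply: eq_bigr => k _.
  by rewrite (big_ord_widen m (fun i => F i (k - i)%N)).
rewrite (exchange_big_dep xpredT) //=; apply: eq_bigr => i _.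
rewrite -(big_geq_mkord i m xpredT (fun k => F i (k - i)%N)).
rewrite -[in LHS](add0n i) big_addn big_mkord.
by apply: eq_bigr => j _; rewrite addnK.
Qed.

Lemma exp_termD (a b : K) k :
  exp_term (a + b) k = \sum_(i < k.+1) exp_term a i * exp_term b (k - i).
Proof.
rewrite /exp_term addrC exprDn mulr_suml; apply: eq_bigr => i _.
have le_ik : (i <= k)%N by rewrite -ltnS.
have fact_neq0 l : (l`!%:R : K) != 0 by rewrite pnatr_eq0 -lt0n fact_gt0.
rewrite -(bin_fact le_ik) !natrM -mulr_natr.
have binom_neq0 : ('C(k, i)%:R : K) != 0 by rewrite pnatr_eq0 -lt0n bin_gt0.
by field; rewrite !fact_neq0 binom_neq0.
Qed.

Lemma exp_psumMB (a b : K) m :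
  exp_psum a m * exp_psum b m - exp_psum (a + b) m =
  \sum_(i < m) \sum_(m - i <= j < m) exp_term a i * exp_term b j.
Proof.
have -> : exp_psum (a + b) m =
    \sum_(k < m) \sum_(i < k.+1) exp_term a i * exp_term b (k - i).
  by apply: eq_bigr => k _; exact: exp_termD.
set t := fun i j => exp_term a i * exp_term b j.
rewrite /exp_psum (sum_triangle m t) mulr_suml -sumrB; apply: eq_bigr => i _.
rewrite mulr_sumr -(big_mkord xpredT (t i)).
by rewrite (@big_cat_nat _ _ _ (m - i)) ?leq_subr //= big_mkord addrC addrK.
Qed.

End ExpPartialSums.

Section ComplexExp.
Variable R : realType.
Local Notation C := (Cx R).

Lemma cexpE (w : C) : cexp w = limn (exp_psum w).
Proof.
rewrite /cexp (_ : series _ = exp_psum w) //.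
by apply/funext => m; rewrite /series /= big_mkord.
Qed.

Lemma cvg_realC (u : R^nat) (l : R) :
  u @ \oo --> l -> (fun m => (u m)%:C : C) @ \oo --> (l%:C : C).
Proof.
move/cvgrPdist_lt => ul; apply/cvgrPdist_lt => e.
rewrite (@ltcE R) /= => /andP[/eqP Ime0 Ree0].
have -> : e = (complex.Re e)%:C by case: e Ime0 {Ree0} => ? ? /= ->.
apply: filterS (ul _ Ree0) => m ulm.
by rewrite -rmorphB (@normc_def R) /= expr0n addr0 sqrtr_sqr (@ltcR R).
Qed.

Lemma cvg_exp_psum_real (r : R) :
  exp_psum (r%:C : C) @ \oo --> ((expR r)%:C : C).
Proof.
have -> : exp_psum (r%:C : C) = fun m => (series (exp_coeff r) m)%:C.
  apply/funext => m; rewrite /series /= big_mkord rmorph_sum.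
  by apply: eq_bigr => k _; rewrite /exp_term rmorphM rmorphXn fmorphV rmorph_nat.
exact/cvg_realC/is_cvg_series_exp_coeff.
Qed.

Lemma exp_term_iR (y : R) k :
  exp_term ('i * y%:C : C) k = (cos_coeff y k)%:C + 'i * (sin_coeff y k)%:C.
Proof.
have i_even j : ('i : C) ^+ j.*2 = ((-1) ^+ j : R)%:C.
  by rewrite -mul2n exprM (@sqr_i R) rmorphXn rmorphN rmorph1.
rewrite /exp_term; have := odd_double_half k; move: k./2 => j.
case: (odd k) => /= <-.
- rewrite add1n cos_coeff_odd rmorph0 add0r exprMn exprS i_even.
  rewrite /sin_coeff /= odd_double /= doubleK mul1r.
  by rewrite !rmorphM rmorphXn fmorphV !rmorph_nat /= rmorphXn -!mulrA rmorphXn.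
- rewrite -[(_ + j.*2)%N]/(j.*2) sin_coeff_even rmorph0 mulr0 addr0 exprMn i_even.
  rewrite /cos_coeff /= odd_double /= doubleK mul1r.
  by rewrite !rmorphM rmorphXn fmorphV !rmorph_nat /= -exprnP !rmorphXn.
Qed.

Lemma cvg_exp_psum_iR (y : R) :
  exp_psum ('i * y%:C : C) @ \oo --> ((cos y)%:C + 'i * (sin y)%:C : C).
Proof.
have -> : exp_psum ('i * y%:C : C) =
    fun m => (series (cos_coeff y) m)%:C + 'i * (series (sin_coeff y) m)%:C.
  apply/funext => m; rewrite /exp_psum; under eq_bigr => k _ do rewrite exp_term_iR.
  by rewrite big_split /= -mulr_sumr /series /= !big_mkord !rmorph_sum.
apply: cvgD; first by apply: cvg_realC; rewrite unlock; exact: is_cvg_series_cos_coeff.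
apply: cvgM; first exact: cvg_cst.
by apply: cvg_realC; rewrite unlock; exact: is_cvg_series_sin_coeff.
Qed.

(* The defect of exp_psumMB at a, b is dominated termwise by the defect at |a|, |b|,
   which tends to 0 because expR is additive. *)
Lemma cvg_exp_psumMB (a b : C) :
  (fun m => exp_psum a m * exp_psum b m - exp_psum (a + b) m) @ \oo --> (0 : C).
Proof.
pose V m := exp_psum `|a| m * exp_psum `|b| m - exp_psum (`|a| + `|b|) m.
have V0 : V @ \oo --> (0 : C).
  rewrite /V; have [ra ->] : exists ra : R, `|a| = ra%:C by eexists; rewrite (@normc_def R).
  have [rb ->] : exists rb : R, `|b| = rb%:C by eexists; rewrite (@normc_def R).
  rewrite (_ : 0 = (expR ra)%:C * (expR rb)%:C - (expR (ra + rb))%:C); last first.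
    by rewrite expRD rmorphM subrr.
  rewrite -rmorphD; apply: cvgB; last exact: cvg_exp_psum_real.
  by apply: cvgM; exact: cvg_exp_psum_real.
have le_V m : `|exp_psum a m * exp_psum b m - exp_psum (a + b) m| <= V m.
  rewrite /V !exp_psumMB; apply: le_trans (ler_norm_sum _ _ _) _.
  apply: ler_sum => i _; apply: le_trans (ler_norm_sum _ _ _) _.
  by apply: ler_sum => j _; rewrite /exp_term !normrM !normfV !normrX !normr_nat.
move/cvgrPdist_lt: V0 => V0; apply/cvgrPdist_lt => e e0.
apply: filterS (V0 e e0) => m.
rewrite !sub0r !normrN => Ve; apply: le_lt_trans (le_V m) _.
by rewrite -[V m]ger0_norm // (le_trans _ (le_V m)).
Qed.

Lemma cvg_exp_psumD (a b A B : C) :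
  exp_psum a @ \oo --> A -> exp_psum b @ \oo --> B ->
  exp_psum (a + b) @ \oo --> A * B.
Proof.
move=> EaA EbB; rewrite -[A * B]subr0.
have -> : exp_psum (a + b) = exp_psum a \* exp_psum b -
    (fun m => exp_psum a m * exp_psum b m - exp_psum (a + b) m).
  by apply/funext => m /=; rewrite subKr.
exact: cvgB (cvgM EaA EbB) (cvg_exp_psumMB a b).
Qed.

Lemma complex_pairE (a b : R) : a +i* b = a%:C + 'i * b%:C :> C.
Proof. exact: (@complexE R (a +i* b)). Qed.

Lemma cexp_cartesian (x y : R) :
  cexp (x%:C + 'i * y%:C : C) = (expR x * cos y) +i* (expR x * sin y).
Proof.
have -> : (expR x * cos y) +i* (expR x * sin y) =
    (expR x)%:C * ((cos y)%:C + 'i * (sin y)%:C) :> C.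
  by rewrite complex_pairE !rmorphM mulrDr mulrCA.
rewrite cexpE; apply: (cvg_lim (@norm_hausdorff _ _)).
by apply: cvg_exp_psumD; [exact: cvg_exp_psum_real | exact: cvg_exp_psum_iR].
Qed.

End ComplexExp.

Section ExpUnitCircle.
Variable R : realType.
Local Notation C := (Cx R).

Lemma cosD2pi_int (y : R) (k : int) : cos (y + pi *+ 2 * k%:~R) = cos y.
Proof.
have cosD2pi_nat m x : cos (x + pi *+ 2 * m%:R) = cos x :> R.
  by rewrite mulr_natr (periodicn (@cosD2pi R)).
case: k => m; first exact: cosD2pi_nat.
by rewrite NegzE mulrN -(cosD2pi_nat m.+1 (y - _)) subrK.
Qed.

Lemma cos_eq1 (y : R) : cos y = 1 -> exists k : int, y = pi *+ 2 * k%:~R.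
Proof.
move=> cosy1.
have pi2_gt0 : 0 < pi *+ 2 :> R by rewrite mulrn_wgt0 // pi_gt0.
pose k := Num.floor (y / (pi *+ 2)); exists k.
pose t := y - pi *+ 2 * k%:~R.
have /andP[le_ky lt_yk] := floor_itv (y / (pi *+ 2)).
rewrite -/k ler_pdivlMr // ltr_pdivrMr // intrD mulrDl mul1r in le_ky lt_yk.
have t_ge0 : 0 <= t by rewrite /t; lra.
have t_lt2pi : t < pi *+ 2 by rewrite /t; lra.
have cost1 : cos t = 1 by rewrite -cosy1 -(cosD2pi_int t k) /t subrK.
suff : t = 0 by move/eqP; rewrite subr_eq0 => /eqP.
have pi_ge0 : 0 <= pi :> R by exact/ltW/pi_gt0.
have cos_inj0 (u : R) : 0 <= u <= pi -> cos u = 1 -> u = 0.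
  move=> /andP[u0 upi] cosu1.
  by apply: cos_inj; rewrite ?in_itv /= ?u0 ?upi ?lexx ?pi_ge0 ?cosu1 ?cos0.
have [le_tpi|lt_pit] := lerP t pi; first by apply: cos_inj0; rewrite ?t_ge0.
suff : pi *+ 2 - t = 0 by lra.
apply: cos_inj0; first by apply/andP; split; lra.
by rewrite -cosN opprB -(cosD2pi_int (t - pi *+ 2) 1) mulr1 subrK.
Qed.

Lemma cexp_cartesian_eq1 (x y : R) : cexp (x%:C + 'i * y%:C : C) = 1 ->
  x = 0 /\ exists k : int, y = pi *+ 2 * k%:~R.
Proof.
rewrite cexp_cartesian => -[excos1 exsin0].
have expx_gt0 := expR_gt0 x.
have siny0 : sin y = 0.
  by move/eqP: exsin0; rewrite mulf_eq0 gt_eqF //= => /eqP.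
have [cosy_ge0|cosy_lt0] := lerP 0 (cos y); move: (sin0cos1 siny0).
  rewrite ger0_norm // => cosy1; split; last exact: cos_eq1.
  by apply: expR_inj; rewrite expR0 -excos1 cosy1 mulr1.
rewrite ltr0_norm // => /eqP; rewrite eqr_oppLR => /eqP cosyN1.
by move: excos1; rewrite cosyN1 mulrN1; lra.
Qed.

Lemma two_pi_i_realE (t : R) : two_pi_i R * t%:C = 0%:C + 'i * (pi *+ 2 * t)%:C.
Proof. by rewrite /two_pi_i rmorph0 add0r !rmorphM rmorphMn /= -mulr_natl; ring. Qed.

Lemma two_pi_i_neq0 : two_pi_i R != 0.
Proof.
rewrite /two_pi_i !mulf_neq0 //.
- by rewrite (@eq_complex R) /= negb_and (gt_eqF (@pi_gt0 R)).
- by rewrite (@eq_complex R) /= negb_and oner_eq0 orbT.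
Qed.

Lemma cexp_eq1 (w : C) : cexp w = 1 -> exists k : int, w = two_pi_i R * k%:~R.
Proof.
rewrite [w](@complexE R) => /cexp_cartesian_eq1 [-> [k ->]]; exists k.
by rewrite -(rmorph_int (real_complex R)) two_pi_i_realE.
Qed.

Lemma cexp_two_pi_i_neq1 (q : R) : 0 < q < 1 -> cexp (two_pi_i R * q%:C) != 1.
Proof.
move=> /andP[q_gt0 q_lt1]; apply/eqP.
rewrite two_pi_i_realE => /cexp_cartesian_eq1 [_ [k eq_k]].
have pi2_neq0 : pi *+ 2 != 0 :> R by rewrite mulrn_eq0 /= gt_eqF // pi_gt0.
move/(mulfI pi2_neq0): eq_k q_gt0 q_lt1 => ->.
by rewrite -[1]/(1%:~R : R) ltr0z ltr_int; case: k => [[|m]|].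
Qed.

End ExpUnitCircle.

Section GammaVanishing.
Variable R : realType.
Local Notation C := (Cx R).

Lemma rgamma_opp_nat (m : nat) : rgamma (- m%:R : C) = 0.
Proof.
rewrite /rgamma; apply: (lim_near_cst (@norm_hausdorff _ _)).
exists m => // M /= le_mM.
have lt_mM : (m < M.+1)%N by rewrite ltnS.
by rewrite (bigD1 (Ordinal lt_mM)) //= addNr !mul0r.
Qed.

Lemma log_branch_center (c : C) (rho : R) (f : C -> C) :
  log_branch c rho f -> 0 < rho -> cexp (f c) = c.
Proof.
by case=> _ expf rho_gt0; apply: expf; rewrite /disc /= subrr normr0 (@ltcR R).
Qed.

Lemma rgamma_log1_eq0 (rho : R) (f : C -> C) :
  log_branch 1 rho f -> 0 < rho -> ~ (exists k : nat, f 1 / two_pi_i R = k%:R) ->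
  rgamma (f 1 / two_pi_i R + 1) = 0.
Proof.
move=> logf rho_gt0 not_nat.
have [k fk] := cexp_eq1 (log_branch_center logf rho_gt0).
have fk_div : f 1 / two_pi_i R = k%:~R by rewrite fk mulrC mulKf ?two_pi_i_neq0.
case: k {fk} fk_div => m fm; first by case: not_nat; exists m.
rewrite fm NegzE mulrNz -[(Posz m.+1)%:~R]/(m.+1%:R : C) -natr1 opprD addrNK.
exact: rgamma_opp_nat.
Qed.

Lemma pderiv_vanish n (F : ('I_n -> C) -> C) (j k : 'I_n) (c : C) :
  k != j -> (forall r, r j = c -> F r = 0) ->
  forall r, r j = c -> pderiv k F r = 0.
Proof.
move=> neq_kj F0 r rjc; rewrite /pderiv /cderive.
have -> : (fun w => F (upd r k w)) = cst 0.
  by apply/funext => w; apply: F0; rewrite /upd eq_sym (negbTE neq_kj).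
exact: derive1_cst.
Qed.

Lemma pderivs_vanish n (al : 'I_n -> nat) (F : ('I_n -> C) -> C) (j : 'I_n) (c : C) :
  al j = 0%N -> (forall r, r j = c -> F r = 0) ->
  forall r, r j = c -> pderivs al F r = 0.
Proof.
move=> alj0 F0; rewrite /pderivs; elim: (enum 'I_n) => [//|k s IH] /=.
have [->|neq_kj] := eqVneq k j; first by rewrite alj0.
by elim: (al k) => [//|i IHi] /=; exact: pderiv_vanish.
Qed.

Lemma phi_vanish n (logb : 'I_n -> C -> C) z theta (j : 'I_n) (c : C) :
  rgamma (logb j c / two_pi_i R + 1) = 0 ->
  forall r, r j = c -> phi logb z theta r = 0.
Proof. by move=> rgamma0 r rjc; rewrite /phi (bigD1 j) //= rjc rgamma0 mulr0 mul0r. Qed.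

End GammaVanishing.

Section MPolyTranslate.
Variables (K : comNzRingType) (n : nat).
Local Notation P := {mpoly K[n]}.
Implicit Types p q : P.

Lemma mpoly_alg_ind (Pr : P -> Prop) :
  Pr 1 -> (forall i, Pr 'X_i) ->
  (forall p q, Pr p -> Pr q -> Pr (p + q)) ->
  (forall c p, Pr p -> Pr (c *: p)) ->
  (forall p q, Pr p -> Pr q -> Pr (p * q)) ->
  forall p, Pr p.
Proof.
move=> Pr1 PrX PrD PrZ PrM p; rewrite [p]mpolyE.
have Pr0 : Pr 0 by rewrite -(scale0r 1); exact: PrZ.
apply: big_ind => // m _; apply: PrZ; rewrite mpolyXE_id.
apply: big_ind => // i _; elim: (m i) => [|e IHe]; first by rewrite expr0.
by rewrite exprS; exact: PrM.
Qed.

Lemma mmap_comp_mpoly (S : comNzRingType) (f : {rmorphism K -> S}) (g : 'I_n -> S)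
    p (lq : n.-tuple P) :
  mmap f g (p \mPo lq) = mmap f (fun i => mmap f g (tnth lq i)) p.
Proof.
rewrite comp_mpolyE raddf_sum [RHS]/mmap; apply: eq_bigr => m _.
rewrite /= mmapZ rmorph_prod; congr (_ * _); apply: eq_bigr => i _.
exact: rmorphXn.
Qed.

Definition translate (y : 'I_n -> K) : n.-tuple P := [tuple 'X_i + (y i)%:MP | i < n].

Variable y : 'I_n -> K.

Lemma mderiv_translate i p :
  mderiv i (p \mPo translate y) = mderiv i p \mPo translate y.
Proof.
have compM (a b : P) :
    (a * b) \mPo translate y = (a \mPo translate y) * (b \mPo translate y).
  exact: rmorphM.
elim/mpoly_alg_ind: p => [|k|p q Dp Dq|c p Dp|p q Dp Dq].
- by rewrite comp_mpoly1 -mpolyC1 mderivC comp_mpolyC.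
- rewrite comp_mpolyXU -tnth_nth tnth_mktuple mderivD mderivC addr0 mderivX mnm1E.
  have [->|_] := eqVneq k i; last by rewrite scale0r comp_mpoly0.
  have -> : (U_(i) - U_(i))%MM = 0%MM by apply/mnmP => l; rewrite !mnmE subnn.
  by rewrite mpolyX0 scale1r comp_mpoly1.
- by rewrite !(comp_mpolyD, mderivD) Dp Dq.
- by rewrite !(comp_mpolyZ, mderivZ) Dp.
- by rewrite compM !mderivM comp_mpolyD !compM Dp Dq.
Qed.

Lemma mderivm_translate m p :
  mderivm m (p \mPo translate y) = mderivm m p \mPo translate y.
Proof.
rewrite /mderivm; elim: (enum 'I_n) => [//|i s IH] /=; rewrite IH.
by elim: (m i) => [//|e IHe]; rewrite !iterS IHe mderiv_translate.
Qed.

Lemma meval0_mcoeff0 p : meval (fun _ => 0) p = p@_0.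
Proof.
rewrite [in RHS](mpolyE p) raddf_sum /= mevalE; apply: eq_bigr => m _.
rewrite mcoeffZ mcoeffX; congr (_ * _).
case: (pickP (fun i => m i != 0%N)) => [i nz_mi|m0].
  have /negbTE -> : m != 0%MM by apply: contra nz_mi => /eqP ->; rewrite mnm0E.
  by rewrite (bigD1 i) //= expr0n (negbTE nz_mi) mul0r.
have -> : m = 0%MM by apply/mnmP => i; rewrite mnm0E; apply/eqP/negbFE/m0.
by rewrite eqxx big1 // => i _; rewrite mnm0E expr0.
Qed.

Lemma meval_translate p : meval (fun _ => 0) (p \mPo translate y) = meval y p.
Proof.
rewrite comp_mpoly_meval; apply: meval_eq => i.
by rewrite tnth_mktuple mevalD mevalXU mevalC add0r.
Qed.

Lemma mcoeff_translate m p :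
  (p \mPo translate y)@_m *+ (\prod_(i < n) (m i)`!) = meval y (mderivm m p).
Proof.
have := mcoeff_mderivm m (p \mPo translate y) 0%MM.
rewrite addm0 -meval0_mcoeff0 mderivm_translate meval_translate => ->.
by congr (_ *+ _); apply: eq_bigr => i _; rewrite ffactnn.
Qed.

End MPolyTranslate.

Section Localization.
Variables (R : realType) (n d : nat) (v : 'I_n -> 'I_d -> int) (w : 'I_n -> R).
Variable y : 'I_n -> Cx R.
Local Notation C := (Cx R).
Local Notation LP := {mpoly C[n + n]}.
Local Notation loc0 := (loc_zero v w y).
Local Notation Rsub j := (@Rvar R n j - (y j)%:MP).

Lemma in_idealD (G : LP -> Prop) p q :
  in_ideal G p -> in_ideal G q -> in_ideal G (p + q).
Proof.
elim=> [|g a p' Gg _ IH] Gq; first by rewrite add0r.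
by rewrite -addrA; apply: in_ideal_gen => //; exact: IH.
Qed.

Lemma in_idealMl (G : LP -> Prop) a p : in_ideal G p -> in_ideal G (a * p).
Proof.
elim=> [|g b p' Gg _ IH]; first by rewrite mulr0; constructor.
by rewrite mulrDr mulrA; apply: in_ideal_gen.
Qed.

Lemma loc_zero0 : loc0 0.
Proof. by exists 1; rewrite meval1 oner_neq0 mulr0; split => //; constructor. Qed.

Lemma loc_zeroD p q : loc0 p -> loc0 q -> loc0 (p + q).
Proof.
move=> [s [s_unit sp0]] [t [t_unit tq0]]; exists (s * t).
split; first by rewrite mevalM mulf_neq0.
rewrite mulrDr -!mulrA mulrCA.
by apply: in_idealD; apply: in_idealMl.
Qed.

Lemma loc_zeroMl a p : loc0 p -> loc0 (a * p).
Proof.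
move=> [s [s_unit sp0]]; exists s; split => //.
by rewrite mulrCA; apply: in_idealMl.
Qed.

Lemma loc_zero_sum (I : Type) (r : seq I) (Pr : pred I) (F : I -> LP) :
  (forall i, Pr i -> loc0 (F i)) -> loc0 (\sum_(i <- r | Pr i) F i).
Proof. by move=> F0; apply: big_ind => //; [exact: loc_zero0 | exact: loc_zeroD]. Qed.

Lemma meval_Rvar j : meval (laurent_pt y) (@Rvar R n j) = y j.
Proof.
by rewrite /Rvar mevalXU /laurent_pt -[lshift n j]/(unsplit (inl j)) unsplitK.
Qed.

Lemma loc_zero_nonfan (T : {set 'I_n}) : ~ fan_cone v w T ->
  loc0 (\prod_(j in T | y j == 1) Rsub j).
Proof.
move=> nonfan; exists (\prod_(j in T | y j != 1) (1 - @Rvar R n j)); split.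
  rewrite (big_morph _ (@mevalM _ _ _) (meval1 _)) prodf_seq_neq0.
  apply/allP => j _; apply/implyP => /andP[_ yj1].
  by rewrite mevalB meval1 meval_Rvar subr_eq0 eq_sym.
rewrite [X in _ * X](eq_bigr (fun j => - (1 - @Rvar R n j))); last first.
  by move=> j /andP[_ /eqP ->]; rewrite mpolyC1 opprB.
rewrite prodrN mulrCA [X in _ * X]mulrC -(bigID (fun j => y j == 1)) /=
  -[X in in_ideal _ X]addr0.
by apply: in_ideal_gen; [exact: K0_rel_SR | constructor].
Qed.

Lemma embedP_taylor p :
  embedP p = \sum_(m <- msupp (p \mPo translate y))
     ((p \mPo translate y)@_m)%:MP * \prod_(i < n) Rsub i ^+ m i.
Proof.
rewrite /embedP -[RHS]/(mmap (@mpolyC _ C) (fun j => Rsub j) (p \mPo translate y)).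
rewrite mmap_comp_mpoly; congr (mmap _ _ p); apply/funext => i.
by rewrite tnth_mktuple mmapD mmapC mmapX mmap1U subrK.
Qed.

Lemma loc_zero_taylor_term (c : C) (m : 'X_{1..n}) (N : nat) (J : pred 'I_n) :
  (forall j, loc0 (Rsub j ^+ N)) -> loc0 (\prod_(j | J j) Rsub j) ->
  ((forall i, (m i < N)%N) -> (exists2 j, J j & m j = 0%N) -> c = 0) ->
  loc0 (c%:MP * \prod_(i < n) Rsub i ^+ m i).
Proof.
move=> nilp locJ c0.
have [i le_Nm|lt_mN] := pickP (fun i => N <= m i)%N.
  rewrite (bigD1 i) //= -(subnK le_Nm) exprD mulrAC mulrA.
  exact/loc_zeroMl/nilp.
have {}lt_mN i : (m i < N)%N by rewrite ltnNge lt_mN.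
have [j /andP[Jj /eqP mj0]|m_gt0] := pickP (fun j => J j && (m j == 0%N)).
  by rewrite c0 // ?mpolyC0 ?mul0r; [exact: loc_zero0 | exists j].
have -> : \prod_(i < n) Rsub i ^+ m i =
    \prod_(i < n) Rsub i ^+ (m i - J i) * \prod_(i | J i) Rsub i.
  rewrite [\prod_(i | J i) _]big_mkcond -big_split /=; apply: eq_bigr => i _.
  case: (boolP (J i)) => Ji; last by rewrite subn0 mulr1.
  have mi_gt0 : (0 < m i)%N by rewrite lt0n; move: (m_gt0 i) => /= /negbT; rewrite Ji.
  by rewrite -exprSr subn1 prednK.
by rewrite mulrA; exact: loc_zeroMl.
Qed.

End Localization.

Theorem proposition3p2
  (R : realType) (n d : nat)
  (* A = {v_1, ..., v_n} in N = Z^d, distinct, generating N *)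
  (v : 'I_n -> 'I_d -> int)
  (v_inj : injective v)
  (v_gen : forall x : 'I_d -> int,
      exists c : 'I_n -> int, forall k, x k = \sum_(j < n) c j * v j k)
  (* h : N -> Z with h(v_j) = 1 *)
  (h : 'I_d -> int) (hv : forall j, \sum_(k < d) h k * v j k = 1)
  (* Sigma: the fan of a regular triangulation, given by heights w *)
  (w : 'I_n -> R) (w_reg : regular_triangulation_heights v w)
  (* v in Box(Sigma): v = sum_j q_j v_j, 0 <= q_j < 1, supported on a cone S *)
  (S : {set 'I_n}) (HS : fan_cone v w S)
  (q : 'I_n -> R) (hq : forall j, 0 <= q j < 1)
  (hqS : forall j, j \notin S -> q j = 0)
  (vb : 'I_d -> int)
  (hvb : forall k, (vb k)%:~R = \sum_(j < n) q j * (v j k)%:~R)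
  (* branches log_j of the logarithm on discs B_j = B(y_j, rho_j), 0 notin B_j *)
  (rho : 'I_n -> R) (hrho : forall j, 0 < rho j < 1)
  (logb : 'I_n -> Cx R -> Cx R)
  (hlog : forall j, log_branch (boxy q j) (rho j) (logb j))
  (* a point z with nonzero coordinates and a choice of arg z_j *)
  (z : 'I_n -> Cx R) (theta : 'I_n -> R)
  (hz : forall j, z j != 0)
  (htheta : forall j, z j = (complex.Re (`|z j| : R[i]))%:C * cexp ('i * (theta j)%:C)) :
  (* unless there is a cone sigma containing sigma(v) whose rays contain all
     v_j with log_j(y_j)/(2 pi i) not a nonnegative integer ... *)
  ~ (exists K : {set 'I_n}, fan_cone v w K /\
        (forall j, 0 < q j -> j \in K) /\
        (forall j, ~ (exists k : nat, logb j (boxy q j) / two_pi_i R = k%:R) -> j \in K)) ->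
  (* ... the operator phi(z, R) on (K_0)_v is zero: phi(z, R) = P(R) on (K_0)_v
     for any polynomial P whose derivatives at y^v agree with those of phi(z, .)
     up to an order N at which all R_j - y_j are nilpotent on (K_0)_v *)
  forall (N : nat) (P : mpoly n (Cx R)),
    (forall j, loc_zero v w (boxy q) ((@Rvar R n j - (boxy q j)%:MP) ^+ N)) ->
    (forall al : 'I_n -> nat, (forall j, (al j < N)%N) ->
        meval (boxy q) (mderivs al P) = pderivs al (phi logb z theta) (boxy q)) ->
    loc_zero v w (boxy q) (embedP P).
Proof.
move=> no_cone N P nilp P_taylor; set y := boxy q.
pose T : {set 'I_n} := [set j | (y j != 1) ||
  `[< ~ exists k : nat, logb j (y j) / two_pi_i R = k%:R >]]%SET.
have nonfan : ~ fan_cone v w T.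
  move=> fanT; apply: no_cone; exists T; split => //; split => j; rewrite inE.
    by move=> q_gt0; rewrite cexp_two_pi_i_neq1 // q_gt0; case/andP: (hq j).
  by move=> not_nat; apply/orP; right; apply/asboolP.
pose J j := (j \in T) && (y j == 1).
have phi_vanish_J j : J j -> forall r, r j = y j -> phi logb z theta r = 0.
  rewrite /J inE => /andP[/orP[/negP //|/asboolP not_nat] /eqP yj1].
  apply: phi_vanish; move: not_nat (hlog j); rewrite -/y yj1 => not_nat logj.
  by apply: rgamma_log1_eq0 logj _ not_nat; case/andP: (hrho j).
rewrite (embedP_taylor y P); apply: loc_zero_sum => m _.
apply: (loc_zero_taylor_term (J := J) nilp (loc_zero_nonfan y nonfan)).
move=> m_lt_N [j Jj mj0].
have deriv0 : meval y (mderivm m P) = 0.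
  rewrite -[mderivm m P]/(mderivs (fun i => m i) P) P_taylor //.
  exact: pderivs_vanish mj0 (phi_vanish_J j Jj) _ _.
have facts_gt0 : (0 < \prod_(i < n) (m i)`!)%N by apply: prodn_gt0 => i; exact: fact_gt0.
move/eqP: (mcoeff_translate y m P).
by rewrite deriv0 mulrn_eq0 eqn0Ngt facts_gt0 => /eqP.
Qed.
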